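(* Let $F \in \mathbb{C}^{n \times n}$ be a unitary matrix with $|F_{ij}|^2 \leq \frac{c}{n}$ for all $i,j$ (for some constant $c>0$), and let $S \subseteq \{1,\dots,n\}$ be an index set with $|S| = t$. Then for any $k$-sparse vector $z \in \mathbb{C}^{n}$, $$\|(F^{*})_S F z\|^2_2 \leq \frac{ktc}{n}\|z\|_2^2 .$$
   Context: For a matrix $B \in \mathbb{C}^{m\times N}$ and $S \subseteq \{1,\dots,N\}$, $(B)_S$ denotes the $m \times N$ matrix obtained from $B$ by replacing the columns indexed by $\{1,\dots,N\}\setminus S$ with zero columns. $F^*$ is the conjugate transpose of $F$. A vector is $k$-sparse if it has at most $k$ nonzero entries. *)

From HB Require Import structures.
From mathcomp Require Import all_boot all_order all_algebra.
Set Implicit Arguments. Unset Strict Implicit. Unset Printing Implicit Defensive.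
Import Order.TTheory GRing.Theory Num.Theory.
Local Open Scope ring_scope.

Definition conjT (C : numClosedFieldType) m n (A : 'M[C]_(m, n)) : 'M[C]_(n, m) :=
  (map_mx Num.conj A)^T.

Definition unitary (C : numClosedFieldType) n (F : 'M[C]_n) : Prop :=
  conjT F *m F = 1%:M.

Definition colrestr (C : numClosedFieldType) m N (B : 'M[C]_(m, N)) (S : {set 'I_N}) :
  'M[C]_(m, N) := \matrix_(i, j) (if j \in S then B i j else 0).

Definition norm2 (C : numClosedFieldType) n (v : 'cV[C]_n) : C :=
  \sum_i `|v i ord0| ^+ 2.

Definition sparse (C : numClosedFieldType) n (k : nat) (z : 'cV[C]_n) : bool :=
  (#|[set i | z i ord0 != 0%R]| <= k)%N.

From mathcomp Require Import all_boot all_order all_algebra.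
From mathcomp Require Import ring.

(* Because [F] is unitary, so is its conjugate transpose [G], and
   [|(G)_S w| = |G w_S| = |w_S|], where [w_S] keeps only the entries of
   [w := F z] indexed by [S]. Each entry of [F z] is a sum of at most [k] terms
   [F_jl z_l], so the quadratic-mean inequality
   [(x_1 + ... + x_k)^2 <= k (x_1^2 + ... + x_k^2)] gives
   [|(F z)_j|^2 <= k (c/n) |z|^2]; summing over the [t] indices in [S] gives
   the bound. *)

Set Implicit Arguments. Unset Strict Implicit. Unset Printing Implicit Defensive.
Import Order.TTheory GRing.Theory Num.Theory.
Local Open Scope ring_scope.

Lemma sqr_sum_le_card_sum_sqr (R : numDomainType) (I : finType) (A : {pred I})
    (x : I -> R) :
  (forall i, x i \is Num.real) ->
  (\sum_(i in A) x i) ^+ 2 <= #|A|%:R * \sum_(i in A) x i ^+ 2.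
Proof.
move=> xR; rewrite -(ler_pMn2r (n := 2)) // expr2 big_distrlr /= -sumrMnl.
have -> : #|A|%:R * (\sum_(i in A) x i ^+ 2) *+ 2 =
          \sum_(i in A) \sum_(j in A) (x i ^+ 2 + x j ^+ 2).
  under [RHS]eq_bigr => i _ do rewrite big_split /= sumr_const.
  by rewrite big_split /= sumrMnl sumr_const mulr_natl mulr2n.
apply: ler_sum => i _; rewrite -sumrMnl; apply: ler_sum => j _.
exact: (real_leif_mean_square_scaled (xR i) (xR j)).1.
Qed.

Lemma conjTM (C : numClosedFieldType) m n p (A : 'M[C]_(m, n)) (B : 'M[C]_(n, p)) :
  conjT (A *m B) = conjT B *m conjT A.
Proof. by rewrite /conjT map_mxM trmx_mul. Qed.

Lemma conjTK (C : numClosedFieldType) m n (A : 'M[C]_(m, n)) : conjT (conjT A) = A.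
Proof. by apply/matrixP => i j; rewrite !mxE conjCK. Qed.

Lemma unitary_conjT (C : numClosedFieldType) n (F : 'M[C]_n) :
  unitary F -> unitary (conjT F).
Proof. by rewrite /unitary conjTK; apply: mulmx1C. Qed.

Lemma norm2E (C : numClosedFieldType) n (v : 'cV[C]_n) :
  norm2 v = (conjT v *m v) 0 0.
Proof. by rewrite mxE; apply: eq_bigr => i _; rewrite !mxE normCKC. Qed.

Lemma norm2_isometry (C : numClosedFieldType) m n (A : 'M[C]_(m, n)) (v : 'cV_n) :
  conjT A *m A = 1%:M -> norm2 (A *m v) = norm2 v.
Proof. by move=> AA1; rewrite !norm2E conjTM -mulmxA (mulmxA _ A) AA1 mul1mx. Qed.

Definition rowrestr (C : numClosedFieldType) N p (A : 'M[C]_(N, p)) (S : {set 'I_N}) :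
  'M[C]_(N, p) := \matrix_(i, j) (if i \in S then A i j else 0).

Lemma mul_colrestr (C : numClosedFieldType) m N p (B : 'M[C]_(m, N)) (A : 'M_(N, p)) S :
  colrestr B S *m A = B *m rowrestr A S.
Proof.
apply/matrixP => i j; rewrite !mxE; apply: eq_bigr => l _.
by rewrite !mxE; case: ifP; rewrite ?mul0r ?mulr0.
Qed.

Lemma norm2_rowrestr (C : numClosedFieldType) n (v : 'cV[C]_n) S :
  norm2 (rowrestr v S) = \sum_(i in S) `|v i 0| ^+ 2.
Proof.
rewrite [RHS]big_mkcond; apply: eq_bigr => i _.
by rewrite mxE; case: ifP; rewrite ?normr0 ?expr0n.
Qed.

Lemma sqr_norm_mulmx_sparse (C : numClosedFieldType) m n (F : 'M[C]_(m, n)) (b : C)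
    (k : nat) (z : 'cV[C]_n) :
  (forall i j, `|F i j| ^+ 2 <= b) -> sparse k z ->
  forall i, `|(F *m z) i 0| ^+ 2 <= k%:R * b * norm2 z.
Proof.
move=> hF hz i; set T := [set l | z l 0 != 0].
have off_T l : ~~ (l \in T) -> z l 0 = 0 by rewrite inE negbK => /eqP.
have -> : (F *m z) i 0 = \sum_(l in T) F i l * z l 0.
  by rewrite mxE [RHS]big_rmcond // => l /off_T ->; rewrite mulr0.
have -> : norm2 z = \sum_(l in T) `|z l 0| ^+ 2.
  by rewrite [RHS]big_rmcond // => l /off_T ->; rewrite normr0 expr0n.
have norm_le : `|\sum_(l in T) F i l * z l 0| <= \sum_(l in T) `|F i l| * `|z l 0|.
  by apply: le_trans (ler_norm_sum _ _ _) _; under eq_bigr => l _ do rewrite normrM.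
apply: le_trans (lerXn2r 2 (normr_ge0 _) (le_trans (normr_ge0 _) norm_le) norm_le) _.
have normM_real l : `|F i l| * `|z l 0| \is Num.real by rewrite rpredM ?normr_real.
apply: le_trans (sqr_sum_le_card_sum_sqr _ normM_real) _.
rewrite -mulrA; apply: ler_pM; rewrite ?ler0n ?ler_nat //.
  by apply: sumr_ge0 => l _; rewrite exprn_ge0 ?mulr_ge0.
rewrite mulr_sumr; apply: ler_sum => l _.
by rewrite exprMn; apply: ler_wpM2r (hF i l); rewrite exprn_ge0.
Qed.

Theorem lemma1 (C : numClosedFieldType) (n : nat) (F : 'M[C]_n) (c : C)
  (hc : 0 < c) (hF : unitary F)
  (hentry : forall i j, `|F i j| ^+ 2 <= c / n%:R)
  (S : {set 'I_n}) (t : nat) (hS : #|S| = t)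
  (k : nat) (z : 'cV[C]_n) (hz : sparse k z) :
  norm2 (colrestr (conjT F) S *m (F *m z)) <= (k * t)%:R * c / n%:R * norm2 z.
Proof.
rewrite mul_colrestr norm2_isometry ?unitary_conjT // norm2_rowrestr.
have -> : (k * t)%:R * c / n%:R * norm2 z =
          \sum_(j in S) k%:R * (c / n%:R) * norm2 z.
  by rewrite sumr_const hS -[_ *+ t]mulr_natr natrM; ring.
by apply: ler_sum => j _; apply: sqr_norm_mulmx_sparse.
Qed.
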